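(* For all positive integers $m$ and $n$, $$\sum_{k=1}^nH_k\sum_{j=m}^{n-k+1}\binom{n-k}{j-1}\frac{s(j,m)}{j!}=\frac{1}{m!}H_{n+1}(m+1).$$ In particular, $\sum_{k=1}^n\frac{H_k}{n-k+1}=H_{n+1}^2-H_{n+1}^{(2)}$.
   Context: For integers $m\ge 1$, $n\ge 0$, the multiple harmonic-like numbers are $H_n(m)=\sum_{1\le k_1+k_2+\cdots+k_m\le n}\frac{1}{k_1k_2\cdots k_m}$ (sum over positive integers $k_1,\dots,k_m$), with $H_n(0)=1$ for $n\ge 0$ and $H_0(m)=0$ for $m\ge1$. $H_n=\sum_{k=1}^n\frac1k$, $H_n^{(2)}=\sum_{k=1}^n\frac1{k^2}$. The (signed) Stirling numbers of the first kind $s(n,k)$ are defined by $\sum_{n\ge k}s(n,k)\frac{z^n}{n!}=\frac{\ln^k(1+z)}{k!}$, with $s(n,k)=0$ for $n<k$. *)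

From HB Require Import structures.
From mathcomp Require Import all_boot all_order all_algebra.
Set Implicit Arguments. Unset Strict Implicit. Unset Printing Implicit Defensive.
Import Order.TTheory GRing.Theory Num.Theory.
Local Open Scope ring_scope.

Definition harm (n : nat) : rat := \sum_(1 <= k < n.+1) (k%:R)^-1.

Definition harm2 (n : nat) : rat := \sum_(1 <= k < n.+1) ((k%:R) ^+ 2)^-1.

(* Tuples (k_1,...,k_m) are finite functions 'I_m -> 'I_(n+1) (every
   admissible k_i is <= n).  For m = 0 the only tuple is empty, giving 1;
   for n = 0, m >= 1 no tuple qualifies, giving 0 -- matching the paper's
   conventions. *)
Definition mharm (n m : nat) : rat :=
  \sum_(k : {ffun 'I_m -> 'I_n.+1} |
          [forall i, 0 < (k i : nat)]%N && (\sum_i (k i : nat) <= n)%N)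
     (\prod_i ((k i : nat)%:R : rat))^-1.

(* Signed Stirling numbers of the first kind s(n,k), via the standard
   recurrence s(n+1,k) = s(n,k-1) - n s(n,k), s(0,0)=1, s(0,k+1)=0,
   equivalent to the generating function sum_n s(n,k) z^n/n! = ln^k(1+z)/k!. *)
Fixpoint stirling1 (n k : nat) : int :=
  match n, k with
  | 0, 0 => 1
  | 0, _.+1 => 0
  | n'.+1, 0 => - (n'%:Z) * stirling1 n' 0
  | n'.+1, k'.+1 => stirling1 n' k' - (n'%:Z) * stirling1 n' k
  end.

(* With L(z) = -log(1 - z), the generating function of H_n(m) in n is
   L(z)^m / (1 - z), so the backward differences H_t(m) - H_{t-1}(m) are the
   coefficients of L^m.  Differentiating L^(m+1) = L^m * L with L' = 1/(1 - z)
   gives (t+1) [z^(t+1)] L^(m+1) = (m+1) H_t(m); this recurrence, together with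
   the Stirling recurrence, identifies the inner Stirling sum of the theorem
   with [z^(n-k+1)] L^m / m!.  As H_k = [z^k] L/(1 - z), the outer sum is then
   the Cauchy coefficient [z^(n+1)] L^(m+1) / (1 - z) = H_{n+1}(m+1).  For
   m = 1 the coefficients of L are 1/t, and H_n(2) = H_n^2 - H_n^(2). *)

From HB Require Import structures.
From mathcomp Require Import all_boot all_order all_algebra.
From mathcomp Require Import zify ring.
Import Order.TTheory GRing.Theory Num.Theory.
Local Open Scope ring_scope.
Set Implicit Arguments.
Unset Strict Implicit.

Section FfunCons.

Variables (T : Type) (m : nat).

Definition ffun_cons (a : T) (f : {ffun 'I_m -> T}) : {ffun 'I_m.+1 -> T} :=
  [ffun i => if unlift ord0 i is Some j then f j else a].

Lemma ffun_cons0 a f : ffun_cons a f ord0 = a.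
Proof. by rewrite ffunE unlift_none. Qed.

Lemma ffun_cons_lift a f j : ffun_cons a f (lift ord0 j) = f j.
Proof. by rewrite ffunE liftK. Qed.

Lemma big_ffun_cons (R : Type) (idx : R) (op : R -> R -> R) (F : T -> R) a f :
  \big[op/idx]_(i < m.+1) F (ffun_cons a f i)
  = op (F a) (\big[op/idx]_(j < m) F (f j)).
Proof.
by rewrite big_ord_recl ffun_cons0; congr op; apply: eq_bigr => j _; rewrite ffun_cons_lift.
Qed.

Lemma forall_ffun_cons (P : pred T) a f :
  [forall i, P (ffun_cons a f i)] = P a && [forall j, P (f j)].
Proof.
apply/forallP/andP => [Paf | [Pa /forallP Pf] i].
  by split; [have := Paf ord0 | apply/forallP => j; have := Paf (lift ord0 j)];
    rewrite ?ffun_cons0 ?ffun_cons_lift.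
by rewrite ffunE; case: unliftP.
Qed.

Lemma ffun_cons_bij :
  bijective (fun p : T * {ffun 'I_m -> T} => ffun_cons p.1 p.2).
Proof.
exists (fun g : {ffun 'I_m.+1 -> T} =>
          (g ord0, [ffun j => g (lift ord0 j)] : {ffun 'I_m -> T})).
  case=> a f /=; rewrite ffun_cons0; congr pair.
  by apply/ffunP=> j; rewrite ffunE ffun_cons_lift.
move=> g; apply/ffunP=> i; rewrite ffunE /=.
by case: unliftP => [j ->|->]; rewrite ?ffunE.
Qed.

End FfunCons.

(* H_n(m) with the parts k_i taken in 'I_N: it equals mharm n m as soon as
   n < N, and the extra parameter makes the recursion on m expressible. *)
Definition mharm_bounded (N n m : nat) : rat :=
  \sum_(k : {ffun 'I_m -> 'I_N} |
          [forall i, 0 < (k i : nat)]%N && (\sum_i (k i : nat) <= n)%N)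
     (\prod_i ((k i : nat)%:R : rat))^-1.

Lemma mharm_bounded0 N n : mharm_bounded N n 0 = 1.
Proof.
rewrite /mharm_bounded (eq_bigl xpredT); last first.
  by move=> k; apply/andP; split; [apply/forallP => -[] | rewrite big_ord0].
rewrite (eq_bigr (fun _ => 1)); last by move=> k _; rewrite big_ord0 invr1.
by rewrite sumr_const card_ffun !card_ord expn0.
Qed.

Lemma mharm_boundedS N n m : mharm_bounded N n m.+1 =
  \sum_(a : 'I_N | (0 < a <= n)%N) (a%:R)^-1 * mharm_bounded N (n - a) m.
Proof.
rewrite /mharm_bounded (reindex _ (onW_bij _ (ffun_cons_bij _ _))) /=.
under [in RHS]eq_bigr do rewrite big_distrr; rewrite pair_big_dep /=.
apply: eq_big => [[a k]|[a k] _] /=.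
  rewrite (forall_ffun_cons (fun x : 'I_N => 0 < x)%N).
  rewrite (big_ffun_cons _ _ (fun x : 'I_N => x : nat)).
  case: (posnP a) => [->|a_gt0] //=; case: (leqP a n) => a_n /=.
    by rewrite leq_subRL // andbC.
  by case: [forall j, _] => //=; apply/negbTE; rewrite -ltnNge ltn_addr.
by rewrite (big_ffun_cons _ _ (fun x : 'I_N => (nat_of_ord x)%:R : rat)) invfM.
Qed.

Lemma big_ord_interval1 (R : Type) (idx : R) (op : Monoid.law idx) N n (F : nat -> R) :
  (n < N)%N ->
  \big[op/idx]_(a : 'I_N | (0 < a <= n)%N) F a = \big[op/idx]_(i < n) F i.+1.
Proof.
move=> n_lt_N; rewrite -(big_mkord xpredT (fun i => F i.+1)).
rewrite -(big_add1 _ _ 0 n.+1 xpredT F) (big_nat_widen _ _ _ _ _ n_lt_N).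
by rewrite big_geq_mkord; apply: eq_bigl => a; rewrite andbC ltnS.
Qed.

Fixpoint mharmr (n m : nat) {struct m} : rat :=
  if m is m'.+1 then \sum_(i < n) mharmr (n - i.+1) m' / i.+1%:R else 1.

Lemma mharmrS n m :
  mharmr n m.+1 = \sum_(i < n) mharmr (n - i.+1) m / i.+1%:R.
Proof. by []. Qed.
Arguments mharmr : simpl never.

Lemma mharmr_0 n : mharmr n 0 = 1. Proof. by []. Qed.

Lemma mharmr0S m : mharmr 0 m.+1 = 0. Proof. by rewrite mharmrS big_ord0. Qed.

Lemma mharm_boundedE N n m : (n < N)%N -> mharm_bounded N n m = mharmr n m.
Proof.
elim: m n => [|m IHm] n n_lt_N; first by rewrite mharm_bounded0.
rewrite mharm_boundedS mharmrS.
rewrite (eq_bigr (fun a : 'I_N => (a : nat)%:R^-1 * mharmr (n - a) m)); last first.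
  by move=> a _; rewrite IHm // (leq_ltn_trans (leq_subr _ _)).
rewrite (big_ord_interval1 _ (fun a : nat => a%:R^-1 * mharmr (n - a) m)) //.
by apply: eq_bigr => i _; rewrite mulrC.
Qed.

Lemma mharmE n m : mharm n m = mharmr n m.
Proof. exact: mharm_boundedE. Qed.

(* [mharm_diff t m] is the coefficient of z^t in (-log(1 - z))^m. *)
Definition mharm_diff (t m : nat) : rat :=
  if t is t'.+1 then mharmr t m - mharmr t' m else mharmr 0 m.

Lemma mharmr_Sdiff n m : mharmr n.+1 m = mharmr n m + mharm_diff n.+1 m.
Proof. by rewrite /= addrC subrK. Qed.

Lemma mharmr_sum_diff n m : mharmr n m = \sum_(t < n.+1) mharm_diff t m.
Proof.
elim: n => [|n IHn]; first by rewrite big_ord1.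
by rewrite big_ord_recr -IHn mharmr_Sdiff.
Qed.

Lemma mharm_diff0 m : mharm_diff 0 m.+1 = 0.
Proof. exact: mharmr0S. Qed.

Lemma mharm_diffS0 t : mharm_diff t.+1 0 = 0.
Proof. by rewrite /= !mharmr_0 subrr. Qed.

Lemma mharm_diffSS n m :
  mharm_diff n.+1 m.+1 = \sum_(i < n.+1) mharm_diff (n - i) m / i.+1%:R.
Proof.
rewrite [LHS]/= !mharmrS [in RHS]big_ord_recr [X in X - _]big_ord_recr /= !subnn.
rewrite [in RHS](eq_bigr (fun i : 'I_n =>
          (mharmr (n - i) m - mharmr (n - i.+1) m) / i.+1%:R)); last first.
  by move=> i _; rewrite -(subnSK (ltn_ord i)).
under [X in X + _ - _]eq_bigr do rewrite subSS.
under [in RHS]eq_bigr do rewrite mulrBl.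
rewrite sumrB /=; ring.
Qed.

(* Coefficientwise form of (L^(m+1))' = (m+1) L^m / (1 - z). *)
Lemma mharm_diff_deriv m t :
  t.+1%:R * mharm_diff t.+1 m.+1 = m.+1%:R * mharmr t m.
Proof.
elim: m t => [|m IHm] t.
  rewrite mharm_diffSS big_ord_recr /= subnn big1 ?add0r; last first.
    by move=> i _; rewrite -(subnSK (ltn_ord i)) mharm_diffS0 mul0r.
  by rewrite mul1r mulr1 mulfV // pnatr_eq0.
rewrite mharm_diffSS mulr_sumr.
(* Split the weight t+1 as (i+1) + (t-i): the first parts telescope to
   H_t(m+1), the second ones are handled by the induction hypothesis. *)
have split_weight (i : 'I_t.+1) : t.+1%:R * (mharm_diff (t - i) m.+1 / i.+1%:R) =
    mharm_diff (t - i) m.+1 + (t - i)%N%:R * mharm_diff (t - i) m.+1 / i.+1%:R.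
  rewrite natrB -1?ltnS // -[i.+1%:R]natr1.
  by field; rewrite natr1 pnatr_eq0.
rewrite (eq_bigr _ (fun i _ => split_weight i)) big_split /=.
rewrite (reindex_inj rev_ord_inj) /=.
under [X in X + _]eq_bigr => i _ do rewrite subSS subKn -1?ltnS //.
rewrite -mharmr_sum_diff.
case: t split_weight => [|t] _.
  by rewrite big_ord1 subnn !mul0r addr0 mharmr0S mulr0.
rewrite big_ord_recr /= subnn !mul0r addr0.
under eq_bigr => i _ do rewrite -(subnSK (ltn_ord i)) IHm -mulrA.
rewrite -mulr_sumr mharmrS.
under [in RHS]eq_bigr do rewrite subSS.
rewrite -[m.+2%:R]natr1; ring.
Qed.

Lemma mharm_diff1 t : mharm_diff t.+1 1 = t.+1%:R^-1.
Proof.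
apply: (mulfI (x := t.+1%:R)); first by rewrite pnatr_eq0.
by rewrite mharm_diff_deriv mharmr_0 mulr1 mulfV // pnatr_eq0.
Qed.

Lemma harm0 : harm 0 = 0. Proof. by rewrite /harm big_geq. Qed.

Lemma harm2_0 : harm2 0 = 0. Proof. by rewrite /harm2 big_geq. Qed.

Lemma harmS k : harm k.+1 = harm k + k.+1%:R^-1.
Proof. by rewrite /harm big_nat_recr. Qed.

Lemma harm2S k : harm2 k.+1 = harm2 k + (k.+1%:R ^+ 2)^-1.
Proof. by rewrite /harm2 big_nat_recr. Qed.

Lemma mharmr1 n : mharmr n 1 = harm n.
Proof.
elim: n => [|n IHn]; first by rewrite mharmr0S harm0.
by rewrite mharmr_Sdiff IHn harmS mharm_diff1.
Qed.

Lemma mharmr2 n : mharmr n 2 = harm n ^+ 2 - harm2 n.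
Proof.
elim: n => [|n IHn]; first by rewrite mharmr0S harm0 harm2_0 expr0n subrr.
rewrite mharmr_Sdiff IHn harmS harm2S.
have := mharm_diff_deriv 1 n; rewrite mharmr1 => deriv_n.
have -> : mharm_diff n.+1 2 = 2%:R * harm n / n.+1%:R.
  apply: (mulfI (x := n.+1%:R)); first by rewrite pnatr_eq0.
  by rewrite deriv_n; field; rewrite addrC natr1 pnatr_eq0.
by field; rewrite addrC natr1 pnatr_eq0.
Qed.

Lemma sum_harm_mharm_diff n m :
  \sum_(k < n.+1) harm k * mharm_diff (n - k) m = mharmr n m.+1.
Proof.
elim: n => [|n IHn]; first by rewrite big_ord1 harm0 mul0r mharmr0S.
rewrite big_ord_recl harm0 mul0r add0r mharmr_Sdiff -IHn mharm_diffSS.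
under eq_bigr do rewrite lift0 subSS harmS mulrDl.
rewrite big_split /=; congr (_ + _).
by apply: eq_bigr => i _; rewrite mulrC.
Qed.

Lemma sum_harm_mharm_diff_pos n m : (0 < m)%N ->
  \sum_(1 <= k < n.+1) harm k * mharm_diff (n - k).+1 m = mharmr n.+1 m.+1.
Proof.
case: m => // m _; rewrite -sum_harm_mharm_diff big_ord_recr /= subnn.
rewrite mharm_diff0 mulr0 addr0 big_ord_recl harm0 mul0r add0r big_add1 big_mkord.
by apply: eq_bigr => k _; rewrite subSn // -ltnS.
Qed.

Lemma stirling1_small j m : (j < m)%N -> stirling1 j m = 0.
Proof.
elim: j m => [|j IHj] [|m] //= j_lt_m.
by rewrite !IHj ?mulr0 ?subr0 // ltnW.
Qed.

Lemma stirling1S0 n : stirling1 n.+1 0 = 0.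
Proof. by elim: n => //= n IHn; rewrite IHn mulr0. Qed.

Lemma mul_binS_split N i : ((N.+2) * 'C(N.+1, i) =
  N.+1 * 'C(N, i) + 'C(N, i) * i.+1 + (if i is i'.+1 then 'C(N, i') * i.+1 else 0))%N.
Proof.
case: i => [|i]; first by rewrite !bin0; lia.
rewrite binS; have := mul_bin_left N i.
by case: (leqP i N) => i_N; [nia | rewrite !bin_small; lia].
Qed.

Definition stirling_bsum (N m : nat) : rat :=
  \sum_(i < N.+1) 'C(N, i)%:R * (stirling1 i.+1 m)%:~R / (i.+1)`!%:R.

Lemma stirling_bsumS N m :
  N.+2%:R * stirling_bsum N.+1 m.+1
  = N.+1%:R * stirling_bsum N m.+1 + stirling_bsum N m.
Proof.
set b := fun i : nat => (stirling1 i.+1 m.+1)%:~R / (i.+1)`!%:R : rat.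
have stirlingS i : (stirling1 i.+1 m)%:~R / (i.+1)`!%:R
                   = i.+2%:R * b i.+1 + i.+1%:R * b i.
  rewrite /b [stirling1 i.+2 m.+1]/= [(i.+2)`!]factS natrM rmorphB rmorphM /=.
  by field; rewrite pnatr_eq0 -lt0n fact_gt0 /= -natrD pnatr_eq0.
rewrite /stirling_bsum.
under eq_bigr do rewrite -mulrA -/(b _).
under [X in _ * X + _]eq_bigr do rewrite -mulrA -/(b _).
under [X in _ + X]eq_bigr do rewrite -mulrA stirlingS.
rewrite mulr_sumr.
have weightS (i : nat) : N.+2%:R * ('C(N.+1, i)%:R * b i) =
    (N.+1 * 'C(N, i))%:R * b i + ('C(N, i) * i.+1)%:R * b i +
    (if i is i'.+1 then 'C(N, i') * i.+1 else 0)%N%:R * b i.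
  by rewrite mulrA -!mulrDl -!natrD -natrM mul_binS_split.
rewrite (eq_bigr _ (fun (i : 'I_N.+2) _ => weightS i)) !big_split /=.
rewrite [X in X + _ + _ = _]big_ord_recr [X in _ + X + _ = _]big_ord_recr /=.
rewrite bin_small // muln0 mul0n !mul0r !addr0.
rewrite [X in _ + X = _]big_ord_recl /= mul0r add0r mulr_sumr -!big_split /=.
apply: eq_bigr => i _; rewrite !natrM /bump /= add0n add1n.
by clearbody b; ring.
Qed.

Lemma stirling_bsumE N m : stirling_bsum N m = mharm_diff N.+1 m / m`!%:R.
Proof.
elim: m N => [|m IHm] N.
  rewrite mharm_diffS0 mul0r /stirling_bsum big1 // => i _.
  by rewrite stirling1S0 mulr0 mul0r.
elim: N => [|N IHN].
  rewrite /stirling_bsum big_ord1 mharm_diffSS big_ord1 /= bin0 mul1r divr1.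
  by case: m {IHm} => [|m]; rewrite ?mharmr_0 ?divr1 // mharmr0S !mul0r.
apply: (mulfI (x := N.+2%:R)); first by rewrite pnatr_eq0.
rewrite stirling_bsumS IHN IHm !mulrA !mharm_diff_deriv factS natrM /=.
by field; rewrite pnatr_eq0 -lt0n fact_gt0 /= addrC natr1 pnatr_eq0.
Qed.

Lemma stirling_bsum_shift N m : (0 < m)%N ->
  \sum_(m <= j < N.+2) ('C(N, j.-1)%:R * (stirling1 j m)%:~R / (j`!)%:R)
  = stirling_bsum N m.
Proof.
move=> m_gt0; rewrite big_geq_mkord big_mkcond /=.
rewrite (eq_bigr (fun j : 'I_N.+2 =>
          'C(N, j.-1)%:R * (stirling1 j m)%:~R / (j`!)%:R : rat)); last first.
  by move=> j _; case: leqP => // j_lt_m; rewrite stirling1_small // mulr0 mul0r.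
rewrite -(big_mkord xpredT (fun j => 'C(N, j.-1)%:R * (stirling1 j m)%:~R / (j`!)%:R : rat)).
by rewrite big_ltn // stirling1_small // mulr0 mul0r add0r big_add1 big_mkord.
Qed.

Theorem theorem7 (n : nat) : (0 < n)%N ->
  (forall m : nat, (0 < m)%N ->
     \sum_(1 <= k < n.+1)
        harm k * \sum_(m <= j < (n - k).+2)
          ('C(n - k, j.-1)%:R * (stirling1 j m)%:~R / (j`!)%:R)
     = ((m`!)%:R)^-1 * mharm n.+1 m.+1)
  /\
  \sum_(1 <= k < n.+1) harm k / ((n - k).+1)%:R
     = harm n.+1 ^+ 2 - harm2 n.+1.
Proof.
move=> _; split=> [m m_gt0|].
  under eq_bigr do rewrite stirling_bsum_shift // stirling_bsumE mulrA.
  by rewrite -mulr_suml sum_harm_mharm_diff_pos // mharmE mulrC.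
under eq_bigr do rewrite -mharm_diff1.
by rewrite sum_harm_mharm_diff_pos // mharmr2.
Qed.
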